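(* Let $(W,\odot,\mathbb{1})$ be a monoid and let $(M,+,\mathbb{0},\otimes)$ be an $\omega$-continuous (left) $W$-module. Then for every $W$-wgcl program $C$, the weakest preweighting transformer $\mathrm{wp}[\![C]\!]$ is a well-defined $\omega$-continuous map $\mathrm{Wt}\to\mathrm{Wt}$ on the module of weightings $\mathrm{Wt}=M^{\Sigma}$ (i.e. it preserves suprema of increasing $\omega$-chains). In particular, for every loop $\mathtt{while}(\varphi)\{C\}$ and every $f\in\mathrm{Wt}$, if $\Phi_f(X)=[\neg\varphi]\cdot f+[\varphi]\cdot \mathrm{wp}[\![C]\!](X)$ is its wp-characteristic function with respect to $f$, then $$\mathrm{wp}[\![\mathtt{while}(\varphi)\{C\}]\!](f)=\bigsqcup_{i\in\mathbb{N}}\Phi_f^{\,i}(\mathbb{0}),$$ where $\mathbb{0}$ denotes the constant-$\mathbb{0}$ weighting and $\bigsqcup$ is the supremum with respect to the (pointwise) natural order.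
   Context: A (left) module over a monoid $(W,\odot,\mathbb{1})$ is a commutative monoid $(M,+,\mathbb{0})$ with an action $\otimes\colon W\times M\to M$ such that $(v\odot w)\otimes a=v\otimes(w\otimes a)$, $v\otimes(a+b)=(v\otimes a)+(v\otimes b)$, $\mathbb{1}\otimes a=a$ and $v\otimes\mathbb{0}=\mathbb{0}$ for all $v,w\in W$, $a,b\in M$. The natural order on $M$ is $a\preceq b$ iff there is $c\in M$ with $a+c=b$; $M$ is naturally ordered if $\preceq$ is a partial order (then $\mathbb{0}$ is its least element). $M$ is $\omega$-continuous if it is naturally ordered, every increasing $\omega$-chain in $(M,\preceq)$ has a supremum, and addition (in each argument) and, for each fixed $w\in W$, the map $a\mapsto w\otimes a$ preserve suprema of increasing $\omega$-chains. Program states: $\Sigma$ is the set of states (maps from program variables to values); an expression $E$ has a value $E(\sigma)$ in state $\sigma$; guards $\varphi$ are predicates on states; $\sigma[x\mapsto v]$ is $\sigma$ with $x$ updated to $v$. $W$-wgcl programs are generated by $C::= x:=E \mid C;C \mid \mathtt{if}(\varphi)\{C\}\mathtt{else}\{C\} \mid \{C\}\oplus\{C\} \mid \mathtt{weight}\ a \ (a\in W)\mid \mathtt{while}(\varphi)\{C\}$. Weightings: $\mathrm{Wt}=M^{\Sigma}$ (functions $\Sigma\to M$) with pointwise addition, zero, scalar multiplication $(a\otimes f)(\sigma)=a\otimes f(\sigma)$ and pointwise natural order. For a guard $\varphi$, $([\varphi]\cdot f)(\sigma)=f(\sigma)$ if $\sigma\models\varphi$ and $\mathbb{0}$ otherwise.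 $f[x/E](\sigma)=f(\sigma[x\mapsto E(\sigma)])$. The weakest preweighting transformer is defined by induction on programs: $\mathrm{wp}[\![x:=E]\!](f)=f[x/E]$; $\mathrm{wp}[\![C_1;C_2]\!](f)=\mathrm{wp}[\![C_1]\!](\mathrm{wp}[\![C_2]\!](f))$; $\mathrm{wp}[\![\mathtt{if}(\varphi)\{C_1\}\mathtt{else}\{C_2\}]\!](f)=[\varphi]\cdot\mathrm{wp}[\![C_1]\!](f)+[\neg\varphi]\cdot\mathrm{wp}[\![C_2]\!](f)$; $\mathrm{wp}[\![\{C_1\}\oplus\{C_2\}]\!](f)=\mathrm{wp}[\![C_1]\!](f)+\mathrm{wp}[\![C_2]\!](f)$; $\mathrm{wp}[\![\mathtt{weight}\ a]\!](f)=a\otimes f$; $\mathrm{wp}[\![\mathtt{while}(\varphi)\{C'\}]\!](f)$ is the least fixed point (w.r.t. the pointwise natural order) of $X\mapsto[\neg\varphi]\cdot f+[\varphi]\cdot\mathrm{wp}[\![C']\!](X)$. *)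

Set Implicit Arguments.

Section Weighted.

Variables (W : Type) (wmul : W -> W -> W) (wone : W).
Variables (M : Type) (madd : M -> M -> M) (mzero : M) (act : W -> M -> M).

Definition is_monoid : Prop :=
  (forall u v w, wmul (wmul u v) w = wmul u (wmul v w)) /\
  (forall w, wmul wone w = w) /\ (forall w, wmul w wone = w).

Definition is_comm_monoid : Prop :=
  (forall a b c, madd (madd a b) c = madd a (madd b c)) /\
  (forall a b, madd a b = madd b a) /\
  (forall a, madd mzero a = a).

Definition is_left_module : Prop :=
  is_comm_monoid /\
  (forall v w a, act (wmul v w) a = act v (act w a)) /\
  (forall v a b, act v (madd a b) = madd (act v a) (act v b)) /\
  (forall a, act wone a = a) /\
  (forall v, act v mzero = mzero).

Definition nle (a b : M) : Prop := exists c, madd a c = b.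

Definition increasing_chain {T : Type} (le : T -> T -> Prop) (c : nat -> T) : Prop :=
  forall n, le (c n) (c (S n)).

Definition is_sup {T : Type} (le : T -> T -> Prop) (c : nat -> T) (s : T) : Prop :=
  (forall n, le (c n) s) /\ (forall u, (forall n, le (c n) u) -> le s u).

Definition naturally_ordered : Prop :=
  forall a b, nle a b -> nle b a -> a = b.

Definition omega_continuous_module : Prop :=
  naturally_ordered /\
  (forall c, increasing_chain nle c -> exists s, is_sup nle c s) /\
  (forall c s b, increasing_chain nle c -> is_sup nle c s ->
       is_sup nle (fun n => madd (c n) b) (madd s b)) /\
  (forall c s b, increasing_chain nle c -> is_sup nle c s ->
       is_sup nle (fun n => madd b (c n)) (madd b s)) /\
  (forall w c s, increasing_chain nle c -> is_sup nle c s ->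
       is_sup nle (fun n => act w (c n)) (act w s)).

Variables (Var Val : Type) (var_eq_dec : forall x y : Var, {x = y} + {x <> y}).

Definition State := Var -> Val.
Definition upd (s : State) (x : Var) (v : Val) : State :=
  fun y => if var_eq_dec x y then v else s y.

Inductive prog : Type :=
| Assign : Var -> (State -> Val) -> prog
| Seq : prog -> prog -> prog
| Ite : (State -> bool) -> prog -> prog -> prog
| Choice : prog -> prog -> prog
| Weight : W -> prog
| While : (State -> bool) -> prog -> prog.

Definition Wt := State -> M.
Definition wt_add (f g : Wt) : Wt := fun s => madd (f s) (g s).
Definition wt_zero : Wt := fun _ => mzero.
Definition wt_act (a : W) (f : Wt) : Wt := fun s => act a (f s).
Definition wt_le (f g : Wt) : Prop := forall s, nle (f s) (g s).
Definition guard (phi : State -> bool) (f : Wt) : Wt :=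
  fun s => if phi s then f s else mzero.
Definition neg (phi : State -> bool) : State -> bool := fun s => negb (phi s).
Definition subst (f : Wt) (x : Var) (E : State -> Val) : Wt :=
  fun s => f (upd s x (E s)).

Definition is_lfp (Phi : Wt -> Wt) (X : Wt) : Prop :=
  Phi X = X /\ (forall Y, Phi Y = Y -> wt_le X Y).

Definition char_fun (phi : State -> bool) (T : Wt -> Wt) (f : Wt) : Wt -> Wt :=
  fun X => wt_add (guard (neg phi) f) (guard phi (T X)).

(* [is_wp C T] : T is (a) weakest preweighting transformer of C, following the
   inductive definition; the loop case requires a least fixed point, whose
   existence is part of the claim of well-definedness. *)
Fixpoint is_wp (C : prog) (T : Wt -> Wt) : Prop :=
  match C with
  | Assign x E => forall f, T f = subst f x E
  | Seq C1 C2 => exists T1 T2, is_wp C1 T1 /\ is_wp C2 T2 /\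
                   forall f, T f = T1 (T2 f)
  | Ite phi C1 C2 => exists T1 T2, is_wp C1 T1 /\ is_wp C2 T2 /\
                   forall f, T f = wt_add (guard phi (T1 f)) (guard (neg phi) (T2 f))
  | Choice C1 C2 => exists T1 T2, is_wp C1 T1 /\ is_wp C2 T2 /\
                   forall f, T f = wt_add (T1 f) (T2 f)
  | Weight a => forall f, T f = wt_act a f
  | While phi C' => exists T', is_wp C' T' /\
                   forall f, is_lfp (char_fun phi T' f) (T f)
  end.

Definition omega_continuous_map (T : Wt -> Wt) : Prop :=
  forall F G, increasing_chain wt_le F -> is_sup wt_le F G ->
    is_sup wt_le (fun n => T (F n)) (T G).

End Weighted.

(* Every building block of wp (substitution, guarding, sums, the action of a
   weight) is omega-continuous on Wt = M^Sigma because the order, the sums and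
   the suprema of Wt are computed pointwise and M is an omega-continuous
   module; continuity is closed under composition.  For a loop, the
   characteristic function Phi_f is then continuous, so by Kleene's theorem
   its least fixed point exists and is the supremum of the iterates
   Phi_f^i(0).  Each iterate is continuous as a function of f, and a pointwise
   supremum of continuous maps is continuous, so the loop transformer is
   continuous again, which closes the induction over programs. *)

From Stdlib Require Import FunctionalExtensionality IndefiniteDescription Lia.

Definition omega_cont {T : Type} (le : T -> T -> Prop) (Phi : T -> T) : Prop :=
  forall c s, increasing_chain le c -> is_sup le c s ->
    is_sup le (fun n => Phi (c n)) (Phi s).

Definition least_fixpoint {T : Type} (le : T -> T -> Prop) (Phi : T -> T) (x : T) : Prop :=
  Phi x = x /\ (forall y, Phi y = y -> le x y).

Definition chain_complete {T : Type} (le : T -> T -> Prop) : Prop :=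
  forall c, increasing_chain le c -> exists s, is_sup le c s.

Definition pointwise {A T : Type} (le : T -> T -> Prop) (f g : A -> T) : Prop :=
  forall a, le (f a) (g a).

Section OmegaCPO.
Context {T : Type} {le : T -> T -> Prop}.
Hypothesis le_refl : forall a, le a a.
Hypothesis le_trans : forall a b c, le a b -> le b c -> le a c.
Hypothesis le_antisym : forall a b, le a b -> le b a -> a = b.

Lemma is_sup_unique c x y : is_sup le c x -> is_sup le c y -> x = y.
Proof.
  intros [Ux Lx] [Uy Ly]; apply le_antisym; [apply Lx; exact Uy | apply Ly; exact Ux].
Qed.

Lemma is_sup_const x : is_sup le (fun _ => x) x.
Proof. split; [intros; apply le_refl | intros u Hu; apply (Hu 0)]. Qed.

Lemma increasing_chain_le c :
  increasing_chain le c -> forall n m, n <= m -> le (c n) (c m).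
Proof.
  intros Hc n m Hnm; induction Hnm; [apply le_refl |].
  eapply le_trans; [exact IHHnm | apply Hc].
Qed.

Lemma omega_cont_ext {Phi Psi : T -> T} :
  (forall x, Phi x = Psi x) -> omega_cont le Psi -> omega_cont le Phi.
Proof.
  intros E H; replace Phi with Psi; [exact H |].
  extensionality x; symmetry; apply E.
Qed.

(* Continuity applied to the two-step chain a, b, b, ... *)
Lemma omega_cont_monotone Phi a b :
  omega_cont le Phi -> le a b -> le (Phi a) (Phi b).
Proof.
  intros H Hab.
  set (c := fun n : nat => match n with 0 => a | _ => b end).
  assert (Hsup : is_sup le c b).
  { split; [intros [|n]; simpl; [exact Hab | apply le_refl] | intros u Hu; apply (Hu 1)]. }
  assert (Hchain : increasing_chain le c).
  { intros [|n]; simpl; [exact Hab | apply le_refl]. }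
  apply (proj1 (H c b Hchain Hsup) 0).
Qed.

Lemma omega_cont_chain Phi c :
  omega_cont le Phi -> increasing_chain le c -> increasing_chain le (fun n => Phi (c n)).
Proof. intros H Hc n; apply omega_cont_monotone; [exact H | apply Hc]. Qed.

Lemma omega_cont_const b : omega_cont le (fun _ => b).
Proof. intros c s _ _; apply is_sup_const. Qed.

Lemma omega_cont_comp Phi Psi :
  omega_cont le Phi -> omega_cont le Psi -> omega_cont le (fun x => Phi (Psi x)).
Proof.
  intros HPhi HPsi c s Hc Hs.
  apply HPhi; [apply omega_cont_chain |]; auto.
Qed.

(* Exchange of the suprema over i and over the chain. *)
Lemma omega_cont_sup (H : nat -> T -> T) (L : T -> T) :
  (forall i, omega_cont le (H i)) ->
  (forall x, is_sup le (fun i => H i x) (L x)) -> omega_cont le L.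
Proof.
  intros HH HL c s Hc Hs; split.
  - intro n; apply (proj2 (HL (c n))); intro i.
    eapply le_trans; [| apply (proj1 (HL s) i)].
    apply (proj1 (HH i c s Hc Hs) n).
  - intros u Hu; apply (proj2 (HL s)); intro i.
    apply (proj2 (HH i c s Hc Hs)); intro n.
    eapply le_trans; [apply (proj1 (HL (c n)) i) | apply Hu].
Qed.

Section Kleene.
Context {bot : T} {Phi : T -> T}.
Hypothesis bot_le : forall a, le bot a.
Hypothesis Phi_cont : omega_cont le Phi.

Lemma iterates_increasing : increasing_chain le (fun i => Nat.iter i Phi bot).
Proof.
  intro i; induction i; [apply bot_le |].
  apply (omega_cont_monotone _ _ _ Phi_cont IHi).
Qed.

Lemma sup_iterates_least_fixpoint x :
  is_sup le (fun i => Nat.iter i Phi bot) x -> least_fixpoint le Phi x.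
Proof.
  intros Hx; split.
  - apply (is_sup_unique (fun i => Nat.iter (S i) Phi bot)).
    + apply (Phi_cont _ _ iterates_increasing Hx).
    + split; [intro i; apply (proj1 Hx (S i)) |].
      intros u Hu; apply (proj2 Hx); intros [|i]; [apply bot_le | apply Hu].
  - intros y Hy; apply (proj2 Hx); intro i; induction i; [apply bot_le |].
    simpl; rewrite <- Hy; apply (omega_cont_monotone _ _ _ Phi_cont IHi).
Qed.

Lemma least_fixpoint_unique {x y : T} :
  least_fixpoint le Phi x -> least_fixpoint le Phi y -> x = y.
Proof.
  intros [Fx Lx] [Fy Ly]; apply le_antisym; [apply Lx; exact Fy | apply Ly; exact Fx].
Qed.

Hypothesis le_complete : chain_complete le.

Lemma kleene_least_fixpoint :
  exists x, least_fixpoint le Phi x /\ is_sup le (fun i => Nat.iter i Phi bot) x.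
Proof.
  destruct (le_complete _ iterates_increasing) as [x Hx].
  exists x; split; [apply sup_iterates_least_fixpoint |]; exact Hx.
Qed.

Lemma least_fixpoint_sup_iterates x :
  least_fixpoint le Phi x -> is_sup le (fun i => Nat.iter i Phi bot) x.
Proof.
  intros Hx; destruct kleene_least_fixpoint as [y [Hy Hsup]].
  rewrite (least_fixpoint_unique Hx Hy); exact Hsup.
Qed.

End Kleene.

Section Pointwise.
Context {A : Type}.

Lemma pointwise_refl (f : A -> T) : pointwise le f f.
Proof. intro a; apply le_refl. Qed.

Lemma pointwise_trans (f g h : A -> T) :
  pointwise le f g -> pointwise le g h -> pointwise le f h.
Proof. intros Hfg Hgh a; eapply le_trans; [apply Hfg | apply Hgh]. Qed.

Lemma pointwise_antisym (f g : A -> T) :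
  pointwise le f g -> pointwise le g f -> f = g.
Proof. intros Hfg Hgf; extensionality a; apply le_antisym; [apply Hfg | apply Hgf]. Qed.

Lemma pointwise_is_sup (F : nat -> A -> T) (G : A -> T) :
  (forall a, is_sup le (fun n => F n a) (G a)) -> is_sup (pointwise le) F G.
Proof.
  intros H; split; [intros n a; apply H |].
  intros u Hu a; apply H; intro n; apply Hu.
Qed.

Hypothesis le_complete : chain_complete le.

Lemma pointwise_chain_sup (F : nat -> A -> T) :
  increasing_chain (pointwise le) F ->
  exists G, forall a, is_sup le (fun n => F n a) (G a).
Proof.
  intros HF; apply (functional_choice (fun a x => is_sup le (fun n => F n a) x)); intro a.
  apply le_complete; intro n; apply HF.
Qed.

Lemma pointwise_chain_complete : chain_complete (@pointwise A T le).
Proof.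
  intros F HF; destruct (pointwise_chain_sup F HF) as [G HG].
  exists G; apply pointwise_is_sup; exact HG.
Qed.

Lemma is_sup_pointwise (F : nat -> A -> T) (G : A -> T) :
  increasing_chain (pointwise le) F -> is_sup (pointwise le) F G ->
  forall a, is_sup le (fun n => F n a) (G a).
Proof.
  intros HF HG; destruct (pointwise_chain_sup F HF) as [G' HG'].
  assert (HG'' := pointwise_is_sup F G' HG').
  replace G with G'; [exact HG' |].
  apply pointwise_antisym; [apply (proj2 HG''); apply HG | apply (proj2 HG); apply HG''].
Qed.

End Pointwise.
End OmegaCPO.

Section Module.
Context {W M : Type} {madd : M -> M -> M} {mzero : M} {act : W -> M -> M}.
Hypothesis madd_comm_monoid : is_comm_monoid madd mzero.
Hypothesis M_omega_cont : omega_continuous_module madd act.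

Local Notation le := (nle madd).

Lemma maddA a b c : madd (madd a b) c = madd a (madd b c).
Proof. apply madd_comm_monoid. Qed.

Lemma maddC a b : madd a b = madd b a.
Proof. apply madd_comm_monoid. Qed.

Lemma madd0 a : madd a mzero = a.
Proof. rewrite maddC; apply madd_comm_monoid. Qed.

Lemma nle_refl a : le a a.
Proof. exists mzero; apply madd0. Qed.

Lemma nle_trans a b c : le a b -> le b c -> le a c.
Proof. intros [x <-] [y <-]; exists (madd x y); symmetry; apply maddA. Qed.

Lemma nle_antisym a b : le a b -> le b a -> a = b.
Proof. apply (proj1 M_omega_cont). Qed.

Lemma mzero_nle a : le mzero a.
Proof. exists a; apply madd_comm_monoid. Qed.

Lemma nle_chain_complete : chain_complete le.
Proof. exact (proj1 (proj2 M_omega_cont)). Qed.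

Lemma nle_madd a a' b b' : le a a' -> le b b' -> le (madd a b) (madd a' b').
Proof.
  intros [x <-] [y <-]; exists (madd x y).
  rewrite !maddA; f_equal; rewrite <- !maddA; f_equal; apply maddC.
Qed.

Lemma is_sup_act v c s :
  increasing_chain le c -> is_sup le c s -> is_sup le (fun n => act v (c n)) (act v s).
Proof. apply M_omega_cont. Qed.

(* Bound a n + b m by the sum at index max n m, then use continuity of
   addition in each argument separately. *)
Lemma is_sup_madd a b sa sb :
  increasing_chain le a -> is_sup le a sa ->
  increasing_chain le b -> is_sup le b sb ->
  is_sup le (fun n => madd (a n) (b n)) (madd sa sb).
Proof.
  intros Ha Hsa Hb Hsb; split.
  - intro n; apply nle_madd; [apply Hsa | apply Hsb].
  - intros u Hu.
    assert (Hmix : forall n m, le (madd (a n) (b m)) u).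
    { intros n m; apply nle_trans with (madd (a (max n m)) (b (max n m))); [| apply Hu].
      apply nle_madd; apply (increasing_chain_le nle_refl nle_trans); auto; lia. }
    destruct M_omega_cont as [_ [_ [Hl [Hr _]]]].
    apply (proj2 (Hl a sa sb Ha Hsa)); intro n.
    apply (proj2 (Hr b sb (a n) Hb Hsb)); intro m; apply Hmix.
Qed.

Section Weightings.
Context {Var Val : Type} (var_eq_dec : forall x y : Var, {x = y} + {x <> y}).

Local Notation Wt := (Wt M Var Val).
Local Notation wle := (@wt_le M madd Var Val).
Local Notation wzero := (@wt_zero M mzero Var Val).

Lemma wt_le_refl (f : Wt) : wle f f.
Proof. apply pointwise_refl, nle_refl. Qed.

Lemma wt_le_trans (f g h : Wt) : wle f g -> wle g h -> wle f h.
Proof. apply pointwise_trans, nle_trans. Qed.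

Lemma wt_le_antisym (f g : Wt) : wle f g -> wle g f -> f = g.
Proof. apply pointwise_antisym, nle_antisym. Qed.

Lemma wt_zero_le (f : Wt) : wle wzero f.
Proof. intro s; apply mzero_nle. Qed.

Lemma wt_chain_complete : chain_complete wle.
Proof. exact (pointwise_chain_complete nle_chain_complete). Qed.

Lemma is_sup_wt_pointwise (F : nat -> Wt) (G : Wt) :
  increasing_chain wle F -> is_sup wle F G ->
  forall s, is_sup le (fun n => F n s) (G s).
Proof. apply is_sup_pointwise; [exact nle_antisym | exact nle_chain_complete]. Qed.

Lemma omega_cont_add (T1 T2 : Wt -> Wt) :
  omega_cont wle T1 -> omega_cont wle T2 ->
  omega_cont wle (fun f => wt_add madd (T1 f) (T2 f)).
Proof.
  intros H1 H2 F G HF HG; apply pointwise_is_sup; intro s; apply is_sup_madd.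
  - intro n; apply (omega_cont_chain wt_le_refl _ _ H1 HF).
  - apply (is_sup_wt_pointwise (fun n => T1 (F n)));
      [apply (omega_cont_chain wt_le_refl) | apply H1]; auto.
  - intro n; apply (omega_cont_chain wt_le_refl _ _ H2 HF).
  - apply (is_sup_wt_pointwise (fun n => T2 (F n)));
      [apply (omega_cont_chain wt_le_refl) | apply H2]; auto.
Qed.

Lemma omega_cont_guard phi : omega_cont wle (guard mzero phi).
Proof.
  intros F G HF HG; apply pointwise_is_sup; intro s; unfold guard.
  destruct (phi s); [apply is_sup_wt_pointwise; auto | apply is_sup_const, nle_refl].
Qed.

Lemma omega_cont_subst x E : omega_cont wle (fun f => subst var_eq_dec f x E).
Proof.
  intros F G HF HG; apply pointwise_is_sup; intro s.
  apply (is_sup_wt_pointwise F G HF HG).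
Qed.

Lemma omega_cont_wt_act v : omega_cont wle (wt_act act v).
Proof.
  intros F G HF HG; apply pointwise_is_sup; intro s; apply is_sup_act.
  - intro n; apply HF.
  - apply is_sup_wt_pointwise; auto.
Qed.

Lemma omega_cont_char_fun phi (T : Wt -> Wt) f :
  omega_cont wle T -> omega_cont wle (char_fun madd mzero phi T f).
Proof.
  intros HT; apply omega_cont_add; [apply omega_cont_const, wt_le_refl |].
  apply (omega_cont_comp wt_le_refl); [apply omega_cont_guard | exact HT].
Qed.

(* Continuity in the parameter f, not in the argument of Phi_f. *)
Lemma omega_cont_char_fun_iterate phi (T : Wt -> Wt) i :
  omega_cont wle T ->
  omega_cont wle (fun f => Nat.iter i (char_fun madd mzero phi T f) wzero).
Proof.
  intros HT; induction i; simpl; [apply omega_cont_const, wt_le_refl |].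
  apply omega_cont_add; [apply omega_cont_guard |].
  apply (omega_cont_comp wt_le_refl); [apply omega_cont_guard |].
  apply (omega_cont_comp wt_le_refl); [exact HT | exact IHi].
Qed.

Local Notation wp := (is_wp madd mzero act var_eq_dec).

Lemma is_wp_omega_cont {C : prog W Var Val} {T : Wt -> Wt} :
  wp C T -> omega_cont wle T.
Proof.
  revert T;
  induction C as [x E | C1 IH1 C2 IH2 | phi C1 IH1 C2 IH2 | C1 IH1 C2 IH2 | v | phi C IH];
    simpl; intros T HT.
  - apply (omega_cont_ext HT), omega_cont_subst.
  - destruct HT as (T1 & T2 & H1 & H2 & HT).
    apply (omega_cont_ext HT), (omega_cont_comp wt_le_refl); auto.
  - destruct HT as (T1 & T2 & H1 & H2 & HT).
    apply (omega_cont_ext HT), omega_cont_add;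
      apply (omega_cont_comp wt_le_refl); auto using omega_cont_guard.
  - destruct HT as (T1 & T2 & H1 & H2 & HT).
    apply (omega_cont_ext HT), omega_cont_add; auto.
  - apply (omega_cont_ext HT), omega_cont_wt_act.
  - destruct HT as (T' & H' & HT).
    apply (omega_cont_sup wt_le_trans
             (fun i f => Nat.iter i (char_fun madd mzero phi T' f) wzero)).
    + intro i; apply omega_cont_char_fun_iterate; auto.
    + intro f; exact (least_fixpoint_sup_iterates wt_le_refl wt_le_antisym wt_zero_le
                        (omega_cont_char_fun phi T' f (IH _ H')) wt_chain_complete _ (HT f)).
Qed.

Lemma is_wp_unique {C : prog W Var Val} {T1 T2 : Wt -> Wt} :
  wp C T1 -> wp C T2 -> T1 = T2.
Proof.
  revert T1 T2;
  induction C as [x E | C1 IH1 C2 IH2 | phi C1 IH1 C2 IH2 | C1 IH1 C2 IH2 | v | phi C IH];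
    simpl; intros Ta Tb Ha Hb.
  - extensionality f; rewrite Ha, Hb; reflexivity.
  - destruct Ha as (A1 & A2 & HA1 & HA2 & Ha), Hb as (B1 & B2 & HB1 & HB2 & Hb).
    extensionality f; rewrite Ha, Hb, (IH1 _ _ HA1 HB1), (IH2 _ _ HA2 HB2); reflexivity.
  - destruct Ha as (A1 & A2 & HA1 & HA2 & Ha), Hb as (B1 & B2 & HB1 & HB2 & Hb).
    extensionality f; rewrite Ha, Hb, (IH1 _ _ HA1 HB1), (IH2 _ _ HA2 HB2); reflexivity.
  - destruct Ha as (A1 & A2 & HA1 & HA2 & Ha), Hb as (B1 & B2 & HB1 & HB2 & Hb).
    extensionality f; rewrite Ha, Hb, (IH1 _ _ HA1 HB1), (IH2 _ _ HA2 HB2); reflexivity.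
  - extensionality f; rewrite Ha, Hb; reflexivity.
  - destruct Ha as (A & HA & Ha), Hb as (B & HB & Hb).
    rewrite (IH _ _ HA HB) in Ha.
    extensionality f; exact (least_fixpoint_unique wt_le_antisym (Ha f) (Hb f)).
Qed.

Lemma is_wp_exists (C : prog W Var Val) : exists T, wp C T.
Proof.
  induction C as [x E | C1 [T1 H1] C2 [T2 H2] | phi C1 [T1 H1] C2 [T2 H2]
                 | C1 [T1 H1] C2 [T2 H2] | v | phi C [T' H']]; simpl.
  - exists (fun f => subst var_eq_dec f x E); reflexivity.
  - exists (fun f => T1 (T2 f)), T1, T2; auto.
  - exists (fun f => wt_add madd (guard mzero phi (T1 f)) (guard mzero (neg phi) (T2 f))), T1, T2;
      auto.
  - exists (fun f => wt_add madd (T1 f) (T2 f)), T1, T2; auto.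
  - exists (wt_act act v); reflexivity.
  - assert (Hlfp : forall f, exists X, least_fixpoint wle (char_fun madd mzero phi T' f) X).
    { intro f.
      destruct (kleene_least_fixpoint wt_le_refl wt_le_antisym wt_zero_le
                  (omega_cont_char_fun phi T' f (is_wp_omega_cont H')) wt_chain_complete)
        as [X [HX _]].
      exists X; exact HX. }
    destruct (functional_choice _ Hlfp) as [T HT].
    exists T, T'; auto.
Qed.

Lemma is_wp_while_sup_iterates phi (C : prog W Var Val) (T T' : Wt -> Wt) f :
  wp (While phi C) T -> wp C T' ->
  is_sup wle (fun i => Nat.iter i (char_fun madd mzero phi T' f) wzero) (T f).
Proof.
  intros (T'' & H'' & HT) H'; rewrite (is_wp_unique H'' H') in HT.
  exact (least_fixpoint_sup_iterates wt_le_refl wt_le_antisym wt_zero_le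
           (omega_cont_char_fun phi T' f (is_wp_omega_cont H')) wt_chain_complete _ (HT f)).
Qed.

End Weightings.
End Module.

Theorem mainTheorem1
  (W : Type) (wmul : W -> W -> W) (wone : W)
  (M : Type) (madd : M -> M -> M) (mzero : M) (act : W -> M -> M)
  (Var Val : Type) (var_eq_dec : forall x y : Var, {x = y} + {x <> y})
  (HW : is_monoid wmul wone)
  (HM : is_left_module wmul wone madd mzero act)
  (Hc : omega_continuous_module madd act) :
  forall C : prog W Var Val,
    (* wp[C] is well-defined: there is exactly one transformer satisfying the definition *)
    (exists T, is_wp madd mzero act var_eq_dec C T /\
       forall T', is_wp madd mzero act var_eq_dec C T' -> T' = T) /\
    (* it is omega-continuous *)
    (forall T, is_wp madd mzero act var_eq_dec C T ->
       omega_continuous_map madd T) /\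
    (* Kleene characterisation of loops *)
    (forall (phi : State Var Val -> bool) (C' : prog W Var Val)
            (T T' : Wt M Var Val -> Wt M Var Val) (f : Wt M Var Val),
       C = While phi C' ->
       is_wp madd mzero act var_eq_dec (While phi C') T ->
       is_wp madd mzero act var_eq_dec C' T' ->
       is_sup (@wt_le M madd Var Val)
         (fun i => Nat.iter i (char_fun madd mzero phi T' f) (@wt_zero M mzero Var Val))
         (T f)).
Proof.
  destruct HM as [Hcm _].
  intro C; split; [| split].
  - destruct (is_wp_exists Hcm Hc var_eq_dec C) as [T HT].
    exists T; split; [exact HT |].
    intros T' HT'; exact (is_wp_unique Hc var_eq_dec HT' HT).
  - intros T HT; exact (is_wp_omega_cont Hcm Hc var_eq_dec HT).
  - intros phi C' T T' f _; apply (is_wp_while_sup_iterates Hcm Hc var_eq_dec).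
Qed.
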